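(* Let $(\mathcal V,\{C_n\}_n,e)$ be an operator system and $p\in\mathcal V$ a positive contraction ($0\le p\le e$) with $\alpha_m(p)=1$. Then $(\mathcal V/J_p,\{\widetilde C(p_n)\}_n,p+J_p)$ is an operator system, and it is non-trivial, i.e. $p\notin J_p$.
   Context: An operator system is a $*$-vector space with a proper matrix ordering $\{C_n\}$ ($C_n\subseteq M_n(\mathcal V)_h$) and Archimedean matrix order unit $e$; $e_n=I_n\otimes e$, $p_n=I_n\otimes p$. Define $C(p_n)=\{x\in M_n(\mathcal V): x=x^*,\ \forall\epsilon>0\ \exists t>0 \text{ such that } x+\epsilon p_n+t(e_n-p_n)\in C_n\}$, $J_p=\operatorname{span}(C(p)\cap -C(p))$, and $\widetilde C(p_n)=\{(x_{ij}+J_p)\in M_n(\mathcal V/J_p): (x_{ij})\in C(p_n)\}$. The minimal order norm is $\alpha_m(x)=\sup\{|\varphi(x)|:\varphi \text{ a state on } \mathcal V\}$. *)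

From HB Require Import structures.
From mathcomp Require Import all_boot all_order all_algebra.
From mathcomp Require Import complex.
From mathcomp Require Import classical_sets reals.
Set Implicit Arguments. Unset Strict Implicit. Unset Printing Implicit Defensive.
Import Order.TTheory GRing.Theory Num.Theory.
Local Open Scope ring_scope.
Local Open Scope complex_scope.

Section OpSys.
Variable R : realType.
Local Notation C := R[i].
Variable V : lmodType C.

Definition is_involution (star : V -> V) : Prop :=
  (forall (a : C) (x y : V), star (a *: x + y) = (conjc a) *: star x + star y) /\
  (forall x, star (star x) = x).

Definition is_subspace (J : V -> Prop) : Prop :=
  J 0 /\ (forall (a : C) x y, J x -> J y -> J (a *: x + y)).

Definition mx_star (star : V -> V) n (x : 'M[V]_n) : 'M[V]_n :=
  \matrix_(i, j) star (x j i).

(* x = y in M_n(V/J) *)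
Definition mx_eqmod (J : V -> Prop) n (x y : 'M[V]_n) : Prop :=
  forall i j, J (x i j - y i j).

Definition diagv n (v : V) : 'M[V]_n := \matrix_(i, j) if i == j then v else 0.

Definition mx1 (v : V) : 'M[V]_1 := const_mx v.

Definition mx_conj_act n m (alpha : 'M[C]_(n, m)) (x : 'M[V]_n) : 'M[V]_m :=
  \matrix_(i, j) \sum_(k < n) \sum_(l < n) (conjc (alpha k i) * alpha l j) *: x k l.

Definition mx_rscale n (r : R) (x : 'M[V]_n) : 'M[V]_n := map_mx ( *:%R r%:C) x.

(* The set of cosets  {x + M_n(J) : x in K n}, represented in M_n(V). *)
Definition sat (J : V -> Prop) (K : forall n, 'M[V]_n -> Prop) n (x : 'M[V]_n) : Prop :=
  exists y, K n y /\ mx_eqmod J x y.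

(* (V/J, {K_n + M_n(J)}_n, u + J) is an operator system.  All statements are
   about cosets, expressed on representatives; for J = {0} this is the usual
   notion of an operator system (V, {K_n}, u). *)
Definition opsys_mod (star : V -> V) (J : V -> Prop)
    (K : forall n, 'M[V]_n -> Prop) (u : V) : Prop :=
  let Kt := sat J K in
  let herm n (x : 'M[V]_n) := mx_eqmod J (mx_star star x) x in
  is_involution star /\ is_subspace J /\ (forall v, J v -> J (star v)) /\
  (forall n x, Kt n x -> herm n x) /\
  (forall n x y, Kt n x -> Kt n y -> Kt n (x + y)) /\
  (forall n (r : R) x, 0 <= r -> Kt n x -> Kt n (mx_rscale r x)) /\
  (forall n m (alpha : 'M[C]_(n, m)) x, Kt n x -> Kt m (mx_conj_act alpha x)) /\
  (forall n x, Kt n x -> Kt n (- x) -> mx_eqmod J x 0) /\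
  J (star u - u) /\
  (forall n x, herm n x -> exists r : R, 0 < r /\ Kt n (x + mx_rscale r (diagv n u))) /\
  (forall n x, herm n x ->
     (forall eps : R, 0 < eps -> Kt n (x + mx_rscale eps (diagv n u))) -> Kt n x).

Definition opsys (star : V -> V) (K : forall n, 'M[V]_n -> Prop) (e : V) : Prop :=
  opsys_mod star (fun v => v = 0) K e.

Definition is_state (K : forall n, 'M[V]_n -> Prop) (e : V) (phi : V -> C) : Prop :=
  [/\ forall (a : C) x y, phi (a *: x + y) = a * phi x + phi y,
      forall v, K 1%N (mx1 v) -> 0 <= phi v &
      phi e = 1].

Definition alpha_m (K : forall n, 'M[V]_n -> Prop) (e : V) (x : V) : R :=
  sup [set r : R | exists phi, is_state K e phi /\ (r%:C = `|phi x|)%R].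

Definition Cp (star : V -> V) (K : forall n, 'M[V]_n -> Prop) (e p : V)
    n (x : 'M[V]_n) : Prop :=
  mx_star star x = x /\
  forall eps : R, 0 < eps -> exists t : R, 0 < t /\
    K n (x + diagv n (eps%:C *: p + t%:C *: (e - p))).

Definition span (S : V -> Prop) (v : V) : Prop :=
  exists s : seq (C * V), (forall ax, ax \in s -> S ax.2) /\
    v = \sum_(ax <- s) ax.1 *: ax.2.

Definition Jp (star : V -> V) (K : forall n, 'M[V]_n -> Prop) (e p : V) : V -> Prop :=
  span (fun v => Cp star K e p (mx1 v) /\ Cp star K e p (mx1 (- v))).

End OpSys.

From Pilot Require Import Defs.
From HB Require Import structures.
From mathcomp Require Import all_boot all_order all_algebra.
From mathcomp Require Import complex ring lra.
From mathcomp Require Import classical_sets reals boolp.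
Import Order.TTheory GRing.Theory Num.Theory.
Set Implicit Arguments. Unset Strict Implicit. Unset Printing Implicit Defensive.
Local Open Scope ring_scope.
Local Open Scope complex_scope.

(** The only non-obvious axiom is
   compatibility: alpha^* (x + I (x) q) alpha is repaired by adding
   (c I - alpha^* alpha) (x) q for c large, which is possible because every
   Hermitian complex matrix is bounded below by a scalar matrix.
   If x and -x lie in C(p_n), polarization writes each entry of x as a
   combination of 1x1 compressions of x, which lie in C(p) together with their
   opposites, so the entries of x lie in J_p.  Conversely, since J_p is spanned
   by self-adjoint v with v, -v in C(p), every Hermitian matrix with entries in
   J_p lies in C(p_n).  These two facts make the cosets of C(p_n) a proper matrix
   cone on V/J_p; p is an order unit because x + r e in C_n gives
   x + r p + (eps p + r (e - p)) in C_n, and the Archimedean property is built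
   into the definition of C(p_n).  Finally, if p were in J_p then -p in C(p), so
   -p + p/2 + t (e - p) >= 0 for some t, which is violated at a state phi with
   phi(p) close to alpha_m(p) = 1. *)

Section PositiveMatrices.
Variable R : realType.
Local Notation C := R[i].

Lemma halfCD : (2^-1 : R)%:C + (2^-1 : R)%:C = 1 :> C.
Proof. by rewrite -rmorphD (_ : 2^-1 + 2^-1 = 1 :> R) ?rmorph1 //; lra. Qed.

Definition rank1mx m (w : 'rV[C]_m) : 'M[C]_m :=
  \matrix_(i, j) (conjc (w 0 i) * w 0 j).

(* The cone generated by the w^* w; in finite dimension it consists of all
   positive semidefinite matrices, but only the generated cone is needed. *)
Inductive psd m : 'M[C]_m -> Prop :=
| psd_rank1 w : psd (rank1mx w)
| psdD A B : psd A -> psd B -> psd (A + B)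
| psdZ (r : R) A : 0 <= r -> psd A -> psd (r%:C *: A).

Lemma psd0 m : psd (0 : 'M[C]_m).
Proof.
have -> : (0 : 'M[C]_m) = rank1mx 0 by apply/matrixP => i j; rewrite !mxE mulr0.
exact: psd_rank1.
Qed.

Lemma psd_sum m I (s : seq I) (P : pred I) (F : I -> 'M[C]_m) :
  (forall i, P i -> psd (F i)) -> psd (\sum_(i <- s | P i) F i).
Proof. by move=> H; apply: (big_ind (@psd m)); [exact: psd0 | exact: psdD |]. Qed.

Lemma psd_diag m (D : 'M[C]_m) :
  (forall k l, k != l -> D k l = 0) -> (forall k, 0 <= D k k) -> psd D.
Proof.
move=> Doff Ddiag.
have -> : D = \sum_(k < m) (complex.Re (D k k))%:C *: rank1mx (delta_mx 0 k).
  apply/matrixP => i j; rewrite summxE (bigD1 i) //= big1 ?addr0.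
    rewrite !mxE /= eqxx conjc_nat mul1r.
    have [<-|ij] := eqVneq i j; last by rewrite Doff // mulr0.
    by rewrite mulr1 RRe_real //; exact: ger0_real.
  by move=> k ki; rewrite !mxE /= eq_sym (negbTE ki) conjc_nat !mul0r mulr0.
apply: psd_sum => k _; apply: psdZ; last exact: psd_rank1.
by have := Ddiag k; rewrite lecE /= => /andP [_ ->].
Qed.

Lemma psd1 m : psd (1%:M : 'M[C]_m).
Proof.
by apply: psd_diag => [k l kl|k]; rewrite mxE ?(negbTE kl) // eqxx mulr1n ler01.
Qed.

Definition hermmx m (B : 'M[C]_m) := forall i j, conjc (B i j) = B j i.

Definition bounded_below m (B : 'M[C]_m) :=
  exists2 c : R, 0 <= c & psd (c%:C *: 1%:M + B).

Lemma bounded_below0 m : bounded_below (0 : 'M[C]_m).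
Proof. by exists 0; rewrite // scale0r addr0; exact: psd0. Qed.

Lemma bounded_belowD m (A B : 'M[C]_m) :
  bounded_below A -> bounded_below B -> bounded_below (A + B).
Proof.
move=> [c c0 Ac] [d d0 Bd]; exists (c + d); first exact: addr_ge0.
by rewrite rmorphD scalerDl addrACA; exact: psdD.
Qed.

Lemma bounded_belowZ m (r : R) (B : 'M[C]_m) :
  0 <= r -> bounded_below B -> bounded_below (r%:C *: B).
Proof.
move=> r0 [c c0 Bc]; exists (r * c); first exact: mulr_ge0.
by rewrite rmorphM -scalerA -scalerDr; exact: psdZ.
Qed.

Lemma bounded_below_sum m I (s : seq I) (P : pred I) (F : I -> 'M[C]_m) :
  (forall i, P i -> bounded_below (F i)) -> bounded_below (\sum_(i <- s | P i) F i).
Proof.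
by move=> H; apply: (big_ind (@bounded_below m)); [exact: bounded_below0 | exact: bounded_belowD |].
Qed.

(* With w = e_i + b e_j, the matrix w^* w differs from the elementary Hermitian
   matrix below by a real diagonal one. *)
Lemma bounded_below_elem m (i j : 'I_m) (b : C) :
  bounded_below (b *: delta_mx i j + conjc b *: delta_mx j i).
Proof.
set nb := b * conjc b.
have nb0 : 0 <= nb by exact: mulcJ_ge0.
have Enb : (complex.Re nb)%:C = nb by apply: RRe_real; exact: ger0_real.
exists (1 + complex.Re nb).
  by apply: addr_ge0 => //; move: nb0; rewrite lecE => /andP [].
set w : 'rV[C]_m := delta_mx 0 i + b *: delta_mx 0 j.
have -> : (1 + complex.Re nb)%:C *: 1%:M + (b *: delta_mx i j + conjc b *: delta_mx j i)
    = rank1mx w + ((1 + nb) *: 1%:M - delta_mx i i - nb *: delta_mx j j).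
  apply/matrixP => k l; rewrite !mxE rmorphD /= Enb -!mulnb !natrM.
  by rewrite rmorph1 rmorphD rmorphM !rmorph_nat /nb; ring.
apply: psdD; first exact: psd_rank1.
apply: psd_diag => [k l kl|k]; rewrite !mxE -!mulnb !natrM.
  have kl0 a : ((k == a)%:R * (l == a)%:R : C) = 0.
    have [<-|_] := eqVneq k a; last by rewrite mul0r.
    by rewrite eq_sym (negbTE kl) mulr0.
  by rewrite (negbTE kl) mulr0 !kl0 mulr0 !subr0.
rewrite eqxx mulr1.
case: (k == i); case: (k == j); rewrite /= ?mulr1 ?mulr0 ?subr0.
- by rewrite (_ : 1 + nb - 1 - nb = 0) //; ring.
- by rewrite (_ : 1 + nb - 1 = nb) //; ring.
- by rewrite (_ : 1 + nb - nb = 1) ?ler01 //; ring.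
- by apply: addr_ge0 => //; exact: ler01.
Qed.

Lemma herm_bounded_below m (B : 'M[C]_m) : hermmx B -> bounded_below B.
Proof.
move=> hB.
have BT : B = \sum_(i < m) \sum_(j < m) conjc (B i j) *: delta_mx j i.
  under eq_bigr => i _ do under eq_bigr => j _ do rewrite hB.
  by rewrite exchange_big /=; exact: matrix_sum_delta.
have -> : B = \sum_(i < m) \sum_(j < m)
    (2^-1 : R)%:C *: (B i j *: delta_mx i j + conjc (B i j) *: delta_mx j i).
  under eq_bigr => i _ do rewrite -scaler_sumr big_split /=.
  rewrite -scaler_sumr big_split /= -matrix_sum_delta -BT.
  by rewrite scalerDr -scalerDl halfCD scale1r.
apply: bounded_below_sum => i _; apply: bounded_below_sum => j _.
apply: bounded_belowZ; first by rewrite invr_ge0 ler0n.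
exact: bounded_below_elem.
Qed.

Lemma hermmx1 m : hermmx (1%:M : 'M[C]_m).
Proof.
by move=> i j; rewrite !mxE eq_sym; case: (j == i); rewrite ?conjc_nat.
Qed.

Lemma hermmxN m (B : 'M[C]_m) : hermmx B -> hermmx (- B).
Proof. by move=> hB i j; rewrite !mxE rmorphN /= hB. Qed.

Definition conj_actC n m (alpha : 'M[C]_(n, m)) (B : 'M[C]_n) : 'M[C]_m :=
  \matrix_(i, j) \sum_(k < n) \sum_(l < n) (conjc (alpha k i) * alpha l j) * B k l.

Lemma conj_actC_herm n m (alpha : 'M[C]_(n, m)) B :
  hermmx B -> hermmx (conj_actC alpha B).
Proof.
move=> hB i j; rewrite !mxE rmorph_sum exchange_big /=.
apply: eq_bigr => l _; rewrite rmorph_sum; apply: eq_bigr => k _.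
by rewrite !rmorphM /= conjcK hB (mulrC (alpha l i)).
Qed.

End PositiveMatrices.

Section TensorMatrices.
Variable R : realType.
Local Notation C := R[i].
Variable V : lmodType C.

Definition mx_tens m (B : 'M[C]_m) (v : V) : 'M[V]_m := \matrix_(i, j) (B i j *: v).

Lemma mx_tensDl m (A B : 'M[C]_m) v : mx_tens (A + B) v = mx_tens A v + mx_tens B v.
Proof. by apply/matrixP => i j; rewrite !mxE scalerDl. Qed.

Lemma mx_tensDr m (B : 'M[C]_m) v w : mx_tens B (v + w) = mx_tens B v + mx_tens B w.
Proof. by apply/matrixP => i j; rewrite !mxE scalerDr. Qed.

Lemma mx_tensZl m (B : 'M[C]_m) (a : C) v : mx_tens (a *: B) v = mx_tens B (a *: v).
Proof. by apply/matrixP => i j; rewrite !mxE scalerA mulrC. Qed.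

Lemma mx_tensNr m (B : 'M[C]_m) v : mx_tens B (- v) = - mx_tens B v.
Proof. by apply/matrixP => i j; rewrite !mxE scalerN. Qed.

Lemma diagv_tens n (v : V) : diagv n v = mx_tens 1%:M v.
Proof.
by apply/matrixP => i j; rewrite !mxE; case: (i == j); rewrite ?scale1r ?scale0r.
Qed.

Lemma diagvD n (v w : V) : diagv n (v + w) = diagv n v + diagv n w.
Proof. by rewrite !diagv_tens mx_tensDr. Qed.

Lemma rscaleD m (r : R) (x y : 'M[V]_m) :
  mx_rscale r (x + y) = mx_rscale r x + mx_rscale r y.
Proof. by apply/matrixP => i j; rewrite !mxE scalerDr. Qed.

Lemma rscale_tens m (r : R) (B : 'M[C]_m) v :
  mx_rscale r (mx_tens B v) = mx_tens (r%:C *: B) v.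
Proof. by apply/matrixP => i j; rewrite !mxE scalerA. Qed.

Lemma rscale_diagv n (r : R) (v : V) : mx_rscale r (diagv n v) = diagv n (r%:C *: v).
Proof. by rewrite !diagv_tens rscale_tens mx_tensZl. Qed.

Lemma mx1D (u w : V) : mx1 (u + w) = mx1 u + mx1 w.
Proof. by apply/matrixP => i j; rewrite !mxE. Qed.

Lemma mx1_inj : injective (@mx1 R V).
Proof. by move=> u v /matrixP /(_ 0 0); rewrite !mxE. Qed.

Lemma mx1Z (r : R) (u : V) : mx1 (r%:C *: u) = mx_rscale r (mx1 u).
Proof. by apply/matrixP => i j; rewrite !mxE. Qed.

Lemma conj_actD n m (alpha : 'M[C]_(n, m)) (x y : 'M[V]_n) :
  mx_conj_act alpha (x + y) = mx_conj_act alpha x + mx_conj_act alpha y.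
Proof.
apply/matrixP => i j; rewrite !mxE -big_split; apply: eq_bigr => k _.
by rewrite -big_split; apply: eq_bigr => l _; rewrite !mxE scalerDr.
Qed.

Lemma conj_actN n m (alpha : 'M[C]_(n, m)) (x : 'M[V]_n) :
  mx_conj_act alpha (- x) = - mx_conj_act alpha x.
Proof.
apply/matrixP => i j; rewrite !mxE -sumrN; apply: eq_bigr => k _.
by rewrite -sumrN; apply: eq_bigr => l _; rewrite !mxE scalerN.
Qed.

Lemma conj_act_tens n m (alpha : 'M[C]_(n, m)) B v :
  mx_conj_act alpha (mx_tens B v) = mx_tens (conj_actC alpha B) v.
Proof.
apply/matrixP => i j; rewrite !mxE scaler_suml; apply: eq_bigr => k _.
by rewrite scaler_suml; apply: eq_bigr => l _; rewrite !mxE scalerA.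
Qed.

Lemma conj_act_mx1 m (w : 'rV[C]_m) v : mx_conj_act w (mx1 v) = mx_tens (rank1mx w) v.
Proof. by apply/matrixP => i j; rewrite !mxE !big_ord1 !mxE. Qed.

Lemma sum_delta_tens n (y : 'M[V]_n) :
  \sum_(i < n) \sum_(j < n) mx_tens (delta_mx i j) (y i j) = y.
Proof.
apply/matrixP => a b; rewrite summxE (bigD1 a) //= [X in _ + X]big1 ?addr0; last first.
  move=> i ia; rewrite summxE big1 // => j _.
  by rewrite !mxE (eq_sym a) (negbTE ia) scale0r.
rewrite summxE (bigD1 b) //= [X in _ + X]big1 ?addr0; last first.
  by move=> j jb; rewrite !mxE (eq_sym b) (negbTE jb) andbF scale0r.
by rewrite !mxE !eqxx scale1r.
Qed.

Lemma sum_delta2 n (F : 'I_n -> 'I_n -> V) (a b : 'I_n) (c : C) :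
  \sum_(k < n) \sum_(l < n) (c * ((k == a)%:R * (l == b)%:R)) *: F k l = c *: F a b.
Proof.
rewrite (bigD1 a) //= [X in _ + X]big1 ?addr0; last first.
  by move=> k ka; apply: big1 => l _; rewrite (negbTE ka) mul0r mulr0 scale0r.
rewrite (bigD1 b) //= [X in _ + X]big1 ?addr0; last first.
  by move=> l lb; rewrite (negbTE lb) !mulr0 scale0r.
by rewrite !eqxx !mulr1.
Qed.

Lemma conj_act_pair n (x : 'M[V]_n) (i j : 'I_n) (u w : C) :
  mx_conj_act (u *: delta_mx i 0 + w *: delta_mx j 0 : 'cV_n) x 0 0 =
  (conjc u * u) *: x i i + (conjc u * w) *: x i j
    + (conjc w * u) *: x j i + (conjc w * w) *: x j j.
Proof.
set alpha := (X in mx_conj_act X).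
have alphaE k : alpha k 0 = u * (k == i)%:R + w * (k == j)%:R.
  by rewrite !mxE !eqxx !andbT.
have alpha2E k l : conjc (alpha k 0) * alpha l 0 =
    conjc u * u * ((k == i)%:R * (l == i)%:R) + conjc u * w * ((k == i)%:R * (l == j)%:R)
  + conjc w * u * ((k == j)%:R * (l == i)%:R) + conjc w * w * ((k == j)%:R * (l == j)%:R).
  by rewrite !alphaE rmorphD !rmorphM /= !conjc_nat; ring.
rewrite mxE; under eq_bigr => k _ do under eq_bigr => l _ do rewrite alpha2E !scalerDl.
under eq_bigr => k _ do rewrite !big_split /=.
by rewrite !big_split /= !sum_delta2.
Qed.

Definition matrix_cone (P : forall n, 'M[V]_n -> Prop) :=
  [/\ forall n x y, P n x -> P n y -> P n (x + y),
      forall n (r : R) x, 0 <= r -> P n x -> P n (mx_rscale r x) &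
      forall n m (alpha : 'M[C]_(n, m)) x, P n x -> P m (mx_conj_act alpha x)].

Lemma matrix_cone_tens P q m (B : 'M[C]_m) :
  matrix_cone P -> P 1%N (mx1 q) -> psd B -> P m (mx_tens B q).
Proof.
move=> [PD PZ Pconj] Pq; elim => {B} [w|A B _ PA _ PB|r A r0 _ PA].
- by rewrite -conj_act_mx1; exact: Pconj.
- by rewrite mx_tensDl; exact: PD.
- by rewrite -rscale_tens; exact: PZ.
Qed.

Lemma polarization (a b c d : V) :
  (2^-1 : C) *: ((a + (b + c) + d - a - d)
    - 'i *: (a + ('i *: b - 'i *: c) + d - a - d)) = b.
Proof.
have cancel_ad y : a + y + d - a - d = y by rewrite addrAC addrK (addrC a) addrK.
have ii y : 'i *: ('i *: y) = - y :> V by rewrite scalerA -expr2 sqr_i scaleN1r.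
rewrite !cancel_ad (scalerBr 'i) !ii opprK (addrC (- b)) opprD opprK addrA addrK.
by rewrite -mulr2n -(@scaler_nat _ V) scalerA mulVf ?scale1r ?pnatr_eq0.
Qed.

End TensorMatrices.

Section Involution.
Variable R : realType.
Local Notation C := R[i].
Variable V : lmodType C.
Variable star : V -> V.
Hypothesis starI : is_involution star.

Lemma starK : involutive star.
Proof. by case: starI. Qed.

Lemma starD x y : star (x + y) = star x + star y.
Proof. by rewrite -(scale1r x) (proj1 starI) conjc1 !scale1r. Qed.

Lemma star0 : star 0 = 0.
Proof. by apply/(addrI (star 0)); rewrite -starD !addr0. Qed.

Lemma starZ (a : C) x : star (a *: x) = conjc a *: star x.
Proof. by rewrite -(addr0 (a *: x)) (proj1 starI) star0 addr0. Qed.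

Lemma starN x : star (- x) = - star x.
Proof. by rewrite -scaleN1r starZ rmorphN1 scaleN1r. Qed.

Lemma starB x y : star (x - y) = star x - star y.
Proof. by rewrite starD starN. Qed.

Lemma star_sum I (s : seq I) (P : pred I) (F : I -> V) :
  star (\sum_(i <- s | P i) F i) = \sum_(i <- s | P i) star (F i).
Proof. exact: (big_morph star starD star0). Qed.

Lemma mx_starK n : involutive (@mx_star R V star n).
Proof. by move=> x; apply/matrixP => i j; rewrite !mxE starK. Qed.

Lemma mx_starD n (x y : 'M[V]_n) : mx_star star (x + y) = mx_star star x + mx_star star y.
Proof. by apply/matrixP => i j; rewrite !mxE starD. Qed.

Lemma mx_starN n (x : 'M[V]_n) : mx_star star (- x) = - mx_star star x.
Proof. by apply/matrixP => i j; rewrite !mxE starN. Qed.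

Lemma mx_star_rscale n r (x : 'M[V]_n) :
  mx_star star (mx_rscale r x) = mx_rscale r (mx_star star x).
Proof. by apply/matrixP => i j; rewrite !mxE starZ conjc_real. Qed.

Lemma mx_star_conj_act n m (alpha : 'M[C]_(n, m)) (x : 'M[V]_n) :
  mx_star star (mx_conj_act alpha x) = mx_conj_act alpha (mx_star star x).
Proof.
apply/matrixP => i j; rewrite !mxE star_sum exchange_big /=.
apply: eq_bigr => l _; rewrite star_sum; apply: eq_bigr => k _.
by rewrite !mxE starZ rmorphM /= conjcK mulrC.
Qed.

Lemma mx_star_mx1 v : mx_star star (mx1 v) = mx1 (star v).
Proof. by apply/matrixP => i j; rewrite !mxE. Qed.

Lemma mx_star_tens n (B : 'M[C]_n) v :
  hermmx B -> star v = v -> mx_star star (mx_tens B v) = mx_tens B v.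
Proof. by move=> hB hv; apply/matrixP => i j; rewrite !mxE starZ hB hv. Qed.

Lemma mx_star_diagv n v : star v = v -> mx_star star (diagv n v) = diagv n v.
Proof. by move=> hv; rewrite diagv_tens mx_star_tens //; exact: hermmx1. Qed.

Definition herm_elem n (i j : 'I_n) (u : V) : 'M[V]_n :=
  mx_tens (delta_mx i j) u + mx_tens (delta_mx j i) (star u).

Lemma herm_elemD n (i j : 'I_n) : {morph herm_elem i j : u w / u + w}.
Proof. by move=> u w; rewrite /herm_elem starD !mx_tensDr addrACA. Qed.

Lemma herm_elem0 n (i j : 'I_n) : herm_elem i j 0 = 0.
Proof. by apply/matrixP => a b; rewrite !mxE star0 !scaler0 addr0. Qed.

Lemma herm_elem_tens n (i j : 'I_n) (a : C) v : star v = v ->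
  herm_elem i j (a *: v) = mx_tens (a *: delta_mx i j + conjc a *: delta_mx j i) v.
Proof. by move=> hv; rewrite /herm_elem starZ hv -!mx_tensZl -mx_tensDl. Qed.

Lemma herm_elem_sum n (x : 'M[V]_n) : mx_star star x = x ->
  x = mx_rscale (2^-1) (\sum_(i < n) \sum_(j < n) herm_elem i j (x i j)).
Proof.
move=> hx; rewrite /herm_elem; under eq_bigr => i _ do rewrite big_split /=.
rewrite big_split /= sum_delta_tens exchange_big /=.
have starE a b : star (x b a) = mx_star star x a b by rewrite mxE.
under eq_bigr => a _ do under eq_bigr => b _ do rewrite starE.
rewrite sum_delta_tens hx; apply/matrixP => a b; rewrite !mxE.
by rewrite scalerDr -scalerDl halfCD scale1r.
Qed.

End Involution.

Section Subspaces.
Variable R : realType.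
Local Notation C := R[i].
Variable V : lmodType C.

Lemma span_subspace (S : V -> Prop) : is_subspace (Defs.span S).
Proof.
split; first by exists [::]; rewrite big_nil.
move=> a _ _ [sx [Hsx ->]] [sy [Hsy ->]].
exists ([seq (a * ax.1, ax.2) | ax <- sx] ++ sy); split.
  by move=> ax; rewrite mem_cat => /orP [/mapP [bx /Hsx bxs ->] | /Hsy].
rewrite big_cat big_map /= scaler_sumr; congr (_ + _).
by apply: eq_bigr => ax _; rewrite scalerA.
Qed.

Lemma span_mem (S : V -> Prop) v : S v -> Defs.span S v.
Proof.
by move=> Sv; exists [:: (1, v)]; rewrite big_seq1 scale1r; split=> // ax /[!inE] /eqP ->.
Qed.

Variable J : V -> Prop.
Hypothesis Jsub : is_subspace J.

Lemma subspace0 : J 0.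
Proof. by case: Jsub. Qed.

Lemma subspaceD x y : J x -> J y -> J (x + y).
Proof. by move=> Jx Jy; rewrite -(scale1r x); exact: (proj2 Jsub). Qed.

Lemma subspaceZ (a : C) x : J x -> J (a *: x).
Proof. by move=> Jx; rewrite -(addr0 (a *: x)); exact: (proj2 Jsub) Jx subspace0. Qed.

Lemma subspaceN x : J x -> J (- x).
Proof. by rewrite -scaleN1r; exact: subspaceZ. Qed.

Lemma subspaceB x y : J x -> J y -> J (x - y).
Proof. by move=> Jx /subspaceN; exact: subspaceD. Qed.

Lemma subspace_sum I (s : seq I) (P : pred I) (F : I -> V) :
  (forall i, P i -> J (F i)) -> J (\sum_(i <- s | P i) F i).
Proof. by move=> H; apply: (big_ind J); [exact: subspace0 | exact: subspaceD |]. Qed.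

Lemma eqmod_refl n (x : 'M[V]_n) : mx_eqmod J x x.
Proof. by move=> i j; rewrite subrr; exact: subspace0. Qed.

Lemma eqmod_sym n (x y : 'M[V]_n) : mx_eqmod J x y -> mx_eqmod J y x.
Proof. by move=> xy i j; rewrite -opprB; exact/subspaceN/xy. Qed.

Lemma eqmod_trans n (x y z : 'M[V]_n) :
  mx_eqmod J x y -> mx_eqmod J y z -> mx_eqmod J x z.
Proof.
by move=> xy yz i j; rewrite -(subrK (y i j) (x i j)) -addrA; exact: subspaceD (xy i j) (yz i j).
Qed.

Lemma eqmodD n (x y z w : 'M[V]_n) :
  mx_eqmod J x y -> mx_eqmod J z w -> mx_eqmod J (x + z) (y + w).
Proof. by move=> xy zw i j; rewrite !mxE opprD addrACA; exact: subspaceD (xy i j) (zw i j). Qed.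

Lemma eqmodN n (x y : 'M[V]_n) : mx_eqmod J x y -> mx_eqmod J (- x) (- y).
Proof. by move=> xy i j; rewrite !mxE -opprD; exact/subspaceN/xy. Qed.

Lemma eqmod_star (star : V -> V) n (x y : 'M[V]_n) :
  is_involution star -> (forall v, J v -> J (star v)) ->
  mx_eqmod J x y -> mx_eqmod J (mx_star star x) (mx_star star y).
Proof. by move=> starI Jstar xy i j; rewrite !mxE -starB //; exact/Jstar/xy. Qed.

End Subspaces.

Section States.
Variable R : realType.
Local Notation C := R[i].
Variable V : lmodType C.
Variable K : forall n, 'M[V]_n -> Prop.
Variable e : V.

Lemma stateD phi : is_state K e phi -> {morph phi : x y / x + y}.
Proof. by move=> [phiL _ _] x y; rewrite -{1}(scale1r x) phiL mul1r. Qed.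

Lemma stateZ phi : is_state K e phi -> forall (a : C) x, phi (a *: x) = a * phi x.
Proof.
move=> phiS a x; have [phiL _ _] := phiS.
have phi0 : phi 0 = 0 by apply/(addrI (phi 0)); rewrite -(stateD phiS) !addr0.
by rewrite -(addr0 (a *: x)) phiL phi0 addr0.
Qed.

Lemma stateN phi : is_state K e phi -> {morph phi : x / - x}.
Proof. by move=> phiS x; rewrite -scaleN1r (stateZ phiS) mulN1r. Qed.

Lemma alpha_m_adherent x d : alpha_m K e x = 1 -> 0 < d ->
  exists2 phi, is_state K e phi & exists2 r : R, 1 - d < r & r%:C = `|phi x|.
Proof.
rewrite /alpha_m; set S := (X in sup X) => S1 d0.
have [supS|] := pselect (has_sup S); last by move/sup_out; rewrite S1 => /eqP; rewrite oner_eq0.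
have [r [phi [phiS phir]]] := sup_adherent d0 supS.
by rewrite S1 => dr; exists phi => //; exists r.
Qed.

End States.

Section OperatorSystem.
Variable R : realType.
Local Notation C := R[i].
Variable V : lmodType C.
Variable star : V -> V.
Variable K : forall n, 'M[V]_n -> Prop.
Arguments K : clear implicits.
Variable e : V.
Hypothesis Kop : opsys star K e.

Lemma opsys_involution : is_involution star.
Proof. by case: Kop. Qed.

Lemma sat_eq0 n (x : 'M[V]_n) : sat (fun v => v = 0) K x <-> K n x.
Proof.
split=> [[y [Ky xy]]|Kx]; last by exists x; split => // i j; rewrite subrr.
by rewrite (_ : x = y) //; apply/matrixP => i j; apply/subr0_eq; exact: xy.
Qed.

Lemma opsys_herm n (x : 'M[V]_n) : K n x -> mx_star star x = x.
Proof.
move=> /sat_eq0 Kx; have [_ [_ [_ [Kherm _]]]] := Kop.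
by apply/matrixP => i j; apply/subr0_eq; exact: Kherm Kx i j.
Qed.

Lemma opsys_cone : matrix_cone K.
Proof.
have [_ [_ [_ [_ [KD [KZ [Kconj _]]]]]]] := Kop.
split=> [n x y /sat_eq0 Kx /sat_eq0 Ky|n r x r0 /sat_eq0 Kx|n m alpha x /sat_eq0 Kx];
  apply/sat_eq0; [exact: KD | exact: KZ | exact: Kconj].
Qed.

Lemma opsys_order_unit n (h : 'M[V]_n) : mx_star star h = h ->
  exists2 r : R, 0 < r & K n (h + mx_rscale r (diagv n e)).
Proof.
move=> hh; have [_ [_ [_ [_ [_ [_ [_ [_ [_ [Kunit _]]]]]]]]]] := Kop.
have [|r [r0 /sat_eq0 Kr]] := Kunit n h; first by move=> i j; rewrite hh subrr.
by exists r.
Qed.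

Lemma opsys_diagv n v : K 1%N (mx1 v) -> K n (diagv n v).
Proof. by move=> Kv; rewrite diagv_tens; apply: (matrix_cone_tens opsys_cone Kv); exact: psd1. Qed.

Variable p : V.
Hypothesis Kp : K 1%N (mx1 p).
Hypothesis Kep : K 1%N (mx1 (e - p)).

Local Notation CP := (Cp star K e p).
Local Notation J := (Jp star K e p).

Lemma star_p : star p = p.
Proof. by apply: mx1_inj; rewrite -mx_star_mx1 opsys_herm. Qed.

Definition combp (a b : R) : V := a%:C *: p + b%:C *: (e - p).

Lemma combpD a b c d : combp a b + combp c d = combp (a + c) (b + d).
Proof. by rewrite /combp !rmorphD !scalerDl addrACA. Qed.

Lemma combpZ r a b : r%:C *: combp a b = combp (r * a) (r * b).
Proof. by rewrite /combp scalerDr !scalerA !rmorphM. Qed.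

Lemma K_combp a b : 0 <= a -> 0 <= b -> K 1%N (mx1 (combp a b)).
Proof.
move=> a0 b0; have [KD KZ _] := opsys_cone.
by rewrite /combp mx1D !mx1Z; apply: KD; apply: KZ.
Qed.

Lemma Cp_herm n (x : 'M[V]_n) : CP x -> mx_star star x = x.
Proof. by case. Qed.

Lemma Cp0 n : CP (0 : 'M[V]_n).
Proof.
split; first by apply/matrixP => i j; rewrite !mxE (star0 opsys_involution).
move=> eps eps0; exists 1; split => //; rewrite add0r; apply: opsys_diagv.
by apply: K_combp; [exact: ltW | exact: ler01].
Qed.

Lemma CpD n (x y : 'M[V]_n) : CP x -> CP y -> CP (x + y).
Proof.
move=> [hx Hx] [hy Hy]; split; first by rewrite mx_starD ?hx ?hy //; exact: opsys_involution.
move=> eps eps0; have e2 : 0 < eps / 2 by rewrite divr_gt0.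
have [t1 [t10 K1]] := Hx _ e2; have [t2 [t20 K2]] := Hy _ e2.
exists (t1 + t2); split; first exact: addr_gt0.
have [KD _ _] := opsys_cone; have := KD _ _ _ K1 K2.
by rewrite addrACA -diagvD -/(combp _ _) -/(combp _ _) combpD -splitr.
Qed.

Lemma CpZ n (r : R) (x : 'M[V]_n) : 0 <= r -> CP x -> CP (mx_rscale r x).
Proof.
move=> r0 [hx Hx]; have [->|rne] := eqVneq r 0.
  rewrite (_ : mx_rscale 0 x = 0); first exact: Cp0.
  by apply/matrixP => i j; rewrite !mxE scale0r.
have rpos : 0 < r by rewrite lt_def rne r0.
split; first by rewrite mx_star_rscale ?hx //; exact: opsys_involution.
move=> eps eps0; have [t [t0 Kt]] := Hx (eps / r) (divr_gt0 eps0 rpos).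
exists (r * t); split; first exact: mulr_gt0.
have [_ KZ _] := opsys_cone; have := KZ _ _ _ r0 Kt.
by rewrite rscaleD rscale_diagv -/(combp _ _) combpZ mulrC divfK.
Qed.

Lemma Cp_conj_act n m (alpha : 'M[C]_(n, m)) x : CP x -> CP (mx_conj_act alpha x).
Proof.
move=> [hx Hx]; split.
  by rewrite mx_star_conj_act ?hx //; exact: opsys_involution.
set A := conj_actC alpha 1%:M.
have [c c0 Ac] := herm_bounded_below (hermmxN (conj_actC_herm alpha (@hermmx1 _ n))).
set c' := c + 1; have c'0 : 0 < c' by rewrite ltr_wpDl.
have c'A : psd (c'%:C *: 1%:M - A).
  rewrite /c' rmorphD rmorph1 scalerDl scale1r addrAC.
  by apply: psdD => //; exact: psd1.
move=> eps eps0; have [t [t0 Kt]] := Hx (eps / c') (divr_gt0 eps0 c'0).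
exists (c' * t); split; first exact: mulr_gt0.
have [KD _ Kconj] := opsys_cone.
have K1 := Kconj _ _ alpha _ Kt.
rewrite conj_actD diagv_tens conj_act_tens -/A in K1.
have K2 : K m (mx_tens (c'%:C *: 1%:M - A) (combp (eps / c') t)).
  apply: (matrix_cone_tens opsys_cone) => //.
  by apply: K_combp; [rewrite ltW // divr_gt0 | exact: ltW].
have := KD _ _ _ K1 K2.
rewrite -addrA -mx_tensDl (addrC A) subrK mx_tensZl -diagv_tens combpZ.
by rewrite mulrC divfK // gt_eqF.
Qed.

Lemma Cp_cone : matrix_cone CP.
Proof. by split=> *; [exact: CpD | exact: CpZ | exact: Cp_conj_act]. Qed.

Lemma Cp_sum n I (s : seq I) (P : pred I) (F : I -> 'M[V]_n) :
  (forall i, P i -> CP (F i)) -> CP (\sum_(i <- s | P i) F i).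
Proof. by move=> H; apply: (big_ind (fun y => CP y)); [exact: Cp0 | exact: CpD |]. Qed.

Lemma Cp_archimedean n (x : 'M[V]_n) : mx_star star x = x ->
  (forall eps : R, 0 < eps -> CP (x + diagv n (eps%:C *: p))) -> CP x.
Proof.
move=> hx Hx; split => // eps eps0; have e2 : 0 < eps / 2 by rewrite divr_gt0.
have [_ /(_ _ e2) [t [t0 Kt]]] := Hx _ e2.
exists t; split => //.
by move: Kt; rewrite -addrA -diagvD addrA -scalerDl -rmorphD -splitr.
Qed.

Definition Jp_gen (v : V) := CP (mx1 v) /\ CP (mx1 (- v)).

Lemma Jp_subspace : is_subspace J.
Proof. exact: span_subspace. Qed.

Lemma Jp_gen_star v : Jp_gen v -> star v = v.
Proof. by move=> [[hv _] _]; apply: mx1_inj; rewrite -mx_star_mx1. Qed.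

Lemma Jp_star v : J v -> J (star v).
Proof.
have starI := opsys_involution.
move=> [s [Hs ->]]; rewrite star_sum // big_seq; apply: (subspace_sum Jp_subspace) => ax /Hs gax.
by rewrite starZ // Jp_gen_star //; apply/(subspaceZ Jp_subspace)/span_mem.
Qed.

Lemma Cp_opp_Jp n (x : 'M[V]_n) : CP x -> CP (- x) -> forall i j, J (x i j).
Proof.
move=> Cx CNx i j.
pose alpha u w : 'cV[C]_n := u *: delta_mx i 0 + w *: delta_mx j 0.
pose f u w := mx_conj_act (alpha u w) x 0 0.
have mx1E (y : 'M[V]_1) : mx1 (y 0 0) = y by apply/matrixP => a b; rewrite !ord1 mxE.
have Jf u w : J (f u w).
  apply: span_mem; split; first by rewrite mx1E; exact: Cp_conj_act.
  rewrite (_ : - f u w = mx_conj_act (alpha u w) (- x) 0 0) ?mx1E; last by rewrite conj_actN mxE.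
  exact: Cp_conj_act.
have fE u w := conj_act_pair x i j u w.
have f10 : f 1 0 = x i i.
  by rewrite /f fE rmorph1 rmorph0 !mul1r !mul0r !scale0r !addr0 scale1r.
have f01 : f 0 1 = x j j.
  by rewrite /f fE rmorph1 rmorph0 !mul1r !mul0r !scale0r !add0r scale1r.
have f11 : f 1 1 = x i i + (x i j + x j i) + x j j.
  by rewrite /f fE rmorph1 !mul1r !scale1r addrA.
have conji : conjc 'i = - 'i :> C by apply/eqP; rewrite eq_complex /= oppr0 !eqxx.
have f1i : f 1 'i = x i i + ('i *: x i j - 'i *: x j i) + x j j.
  by rewrite /f fE rmorph1 conji !mul1r mulr1 mulNr -expr2 sqr_i opprK !scale1r scaleNr addrA.
rewrite -(polarization (x i i) (x i j) (x j i) (x j j)) -f11 -f1i -f10 -f01.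
have JpZ := @subspaceZ _ _ _ Jp_subspace; have JpB := @subspaceB _ _ _ Jp_subspace.
have Jf3 u w : J (f u w - f 1 0 - f 0 1) by exact: JpB (JpB _ _ (Jf _ _) (Jf _ _)) (Jf _ _).
by apply/JpZ/JpB; [| apply: JpZ]; exact: Jf3.
Qed.

Lemma Cp_tens_gen n (i j : 'I_n) (a : C) v :
  Jp_gen v -> CP (mx_tens (a *: delta_mx i j + conjc a *: delta_mx j i) v).
Proof.
move=> [Cv CNv]; have [c c0 Hc] := bounded_below_elem i j a.
set H := (a *: _ + _).
have -> : mx_tens H v = mx_tens (c%:C *: 1%:M + H) v + mx_tens (c%:C *: 1%:M) (- v).
  by rewrite [in RHS]mx_tensDl mx_tensNr addrAC subrr add0r.
apply: CpD; first exact: matrix_cone_tens Cp_cone Cv Hc.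
by apply: (matrix_cone_tens Cp_cone CNv); apply: psdZ c0 _; exact: psd1.
Qed.

Lemma herm_Jp_Cp n (x : 'M[V]_n) :
  mx_star star x = x -> (forall i j, J (x i j)) -> CP x.
Proof.
have starI := opsys_involution.
move=> hx Jx; rewrite (herm_elem_sum hx); apply: CpZ; first by rewrite invr_ge0 ler0n.
apply: Cp_sum => i _; apply: Cp_sum => j _; have [s [Hs ->]] := Jx i j.
rewrite (big_morph _ (herm_elemD starI i j) (herm_elem0 starI i j)) big_seq.
apply: Cp_sum => ax /Hs gax.
by rewrite herm_elem_tens ?Jp_gen_star //; exact: Cp_tens_gen.
Qed.

Lemma Cp_eqmod n (y z : 'M[V]_n) : mx_star star y = y -> CP z -> mx_eqmod J y z -> CP y.
Proof.
have starI := opsys_involution.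
move=> hy Cz yz; rewrite -(subrK z y); apply: (CpD _ Cz).
apply: herm_Jp_Cp => [|i j]; last by rewrite !mxE; exact: yz.
by rewrite (mx_starD starI) (mx_starN starI) hy (Cp_herm Cz).
Qed.

Lemma herm_mod_rep n (x : 'M[V]_n) : mx_eqmod J (mx_star star x) x ->
  exists2 h, mx_star star h = h & mx_eqmod J x h.
Proof.
have starI := opsys_involution.
move=> hx; exists (mx_rscale (2^-1) (x + mx_star star x)).
  by rewrite (mx_star_rscale starI) (mx_starD starI) (mx_starK starI) addrC.
have halfV (v : V) : (2^-1 : R)%:C *: v + (2^-1 : R)%:C *: v = v.
  by rewrite -scalerDl halfCD scale1r.
move=> i j; rewrite !mxE -{1}(halfV (x i j)) scalerDr opprD addrACA subrr add0r -scalerBr.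
apply/(subspaceZ Jp_subspace); rewrite -opprB; apply/(subspaceN Jp_subspace).
by have := hx i j; rewrite mxE.
Qed.

Local Notation Ct := (sat J CP).

Lemma sat_Cp_herm n (x : 'M[V]_n) : Ct x -> mx_eqmod J (mx_star star x) x.
Proof.
move=> [y [Cy xy]].
apply: (eqmod_trans Jp_subspace (eqmod_star opsys_involution Jp_star xy)).
by rewrite (Cp_herm Cy); exact (eqmod_sym Jp_subspace xy).
Qed.

Lemma sat_CpD n (x y : 'M[V]_n) : Ct x -> Ct y -> Ct (x + y).
Proof.
move=> [x' [Cx xx']] [y' [Cy yy']]; exists (x' + y').
by split; [exact: CpD | exact (eqmodD Jp_subspace xx' yy')].
Qed.

Lemma sat_CpZ n (r : R) (x : 'M[V]_n) : 0 <= r -> Ct x -> Ct (mx_rscale r x).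
Proof.
move=> r0 [y [Cy xy]]; exists (mx_rscale r y); split; first exact: CpZ.
by move=> i j; rewrite !mxE -scalerBr; exact/(subspaceZ Jp_subspace)/xy.
Qed.

Lemma sat_Cp_conj_act n m (alpha : 'M[C]_(n, m)) x : Ct x -> Ct (mx_conj_act alpha x).
Proof.
move=> [y [Cy xy]]; exists (mx_conj_act alpha y); split; first exact: Cp_conj_act.
move=> i j; have -> : mx_conj_act alpha x i j - mx_conj_act alpha y i j
    = mx_conj_act alpha (x - y) i j by rewrite conj_actD conj_actN !mxE.
rewrite mxE.
apply: (subspace_sum Jp_subspace) => k _; apply: (subspace_sum Jp_subspace) => l _.
by apply: (subspaceZ Jp_subspace); rewrite !mxE; exact: xy.
Qed.

Lemma sat_Cp_proper n (x : 'M[V]_n) : Ct x -> Ct (- x) -> mx_eqmod J x 0.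
Proof.
move=> [y1 [C1 xy1]] [y2 [C2 xy2]].
have CN1 : CP (- y1).
  apply: (Cp_eqmod _ C2); first by rewrite (mx_starN opsys_involution) (Cp_herm C1).
  exact (eqmod_trans Jp_subspace (eqmodN Jp_subspace (eqmod_sym Jp_subspace xy1)) xy2).
apply: (eqmod_trans Jp_subspace xy1) => i j; rewrite mxE subr0.
exact: Cp_opp_Jp C1 CN1 i j.
Qed.

Lemma sat_Cp_order_unit n (x : 'M[V]_n) : mx_eqmod J (mx_star star x) x ->
  exists r : R, 0 < r /\ Ct (x + mx_rscale r (diagv n p)).
Proof.
have starI := opsys_involution.
move=> /herm_mod_rep [h hh xh]; have [r r0 Kr] := opsys_order_unit hh.
exists r; split => //; exists (h + mx_rscale r (diagv n p)).
split; last exact (eqmodD Jp_subspace xh (eqmod_refl Jp_subspace _)).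
split.
  by rewrite (mx_starD starI) (mx_star_rscale starI) (mx_star_diagv starI) ?hh ?star_p.
move=> eps eps0; exists r; split => //.
have [KD KZ _] := opsys_cone.
have Kpeps : K n (diagv n (eps%:C *: p)).
  by apply: opsys_diagv; rewrite mx1Z; exact: KZ (ltW eps0) Kp.
have := KD _ _ _ Kr Kpeps; rewrite -!addrA !rscale_diagv -!diagvD.
suff -> : r%:C *: p + (eps%:C *: p + r%:C *: (e - p)) = r%:C *: e + eps%:C *: p by [].
by rewrite scalerBr addrCA (addrC (r%:C *: p)) subrK addrC.
Qed.

Lemma sat_Cp_archimedean n (x : 'M[V]_n) : mx_eqmod J (mx_star star x) x ->
  (forall eps : R, 0 < eps -> Ct (x + mx_rscale eps (diagv n p))) -> Ct x.
Proof.
have starI := opsys_involution.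
move=> hx Cxeps; have [y1 [C1 xy1]] := Cxeps 1 ltr01.
set y := y1 - diagv n p.
have hy : mx_star star y = y.
  by rewrite (mx_starD starI) (mx_starN starI) (mx_star_diagv starI) ?star_p ?(Cp_herm C1).
have xy : mx_eqmod J x y.
  have := eqmodD Jp_subspace xy1 (eqmod_refl Jp_subspace (- diagv n p)).
  by rewrite rscale_diagv scale1r addrK.
exists y; split => //; apply: Cp_archimedean => // eps eps0.
have [ye [Ce xye]] := Cxeps eps eps0.
apply: (Cp_eqmod _ Ce).
  by rewrite (mx_starD starI) hy (mx_star_diagv starI) // (starZ starI) conjc_real star_p.
apply: (eqmod_trans Jp_subspace _ xye); rewrite -rscale_diagv.
exact (eqmodD Jp_subspace (eqmod_sym Jp_subspace xy) (eqmod_refl Jp_subspace _)).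
Qed.

Lemma p_notin_Jp : alpha_m K e p = 1 -> ~ J p.
Proof.
move=> alpha1 Jp_p.
have CNp : CP (mx1 (- p)).
  apply: herm_Jp_Cp => [|i j]; first by rewrite mx_star_mx1 (starN opsys_involution) star_p.
  by rewrite mxE; exact (subspaceN Jp_subspace Jp_p).
have [_ /(_ (2^-1)) [|t [t0 Kt]]] := CNp; first by rewrite invr_gt0 ltr0n.
have Kw : K 1%N (mx1 (- p + ((2^-1 : R)%:C *: p + t%:C *: (e - p)))).
  by apply: (eq_ind _ (K 1%N) Kt); apply/matrixP => a b; rewrite !ord1 !mxE.
(* Any d > 0 with t d < (1 - d) / 2 would do. *)
set d := (2 * t + 2)^-1.
have t2 : 0 < 2 * t + 2 by apply: addr_gt0 => //; apply: mulr_gt0.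
have d0 : 0 < d by rewrite invr_gt0.
have dE : d * (2 * t + 2) = 1 by rewrite mulVf // gt_eqF.
have [phi phiS [r rd r_phi]] := alpha_m_adherent alpha1 d0.
have [_ phi_ge0 phie] := phiS.
have phip : phi p = r%:C by rewrite r_phi ger0_norm //; exact: phi_ge0.
have := phi_ge0 _ Kw; rewrite !(stateD phiS, stateZ phiS, stateN phiS) phie phip.
rewrite -(rmorph1 (real_complex R)) -rmorphN -!(rmorphD, rmorphM) ler0c.
have : t * (1 - r) < t * d by rewrite ltr_pM2l //; lra.
nra.
Qed.

End OperatorSystem.

Local Close Scope complex_scope.

Theorem theorem4p9 (R : realType) (V : lmodType R[i]) (star : V -> V)
  (K : forall n, 'M[V]_n -> Prop) (e p : V) :
  opsys star K e ->
  K 1%N (mx1 p) -> K 1%N (mx1 (e - p)) ->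
  alpha_m K e p = 1 ->
  opsys_mod star (Jp star K e p) (Cp star K e p) p /\ ~ Jp star K e p p.
Proof.
move=> Kop Kp Kep alpha1; split; last exact: p_notin_Jp.
split; first exact: opsys_involution Kop.
split; first exact: Jp_subspace.
split; first exact: Jp_star.
split; first exact: sat_Cp_herm.
split; first exact: sat_CpD.
split; first exact: sat_CpZ.
split; first exact: sat_Cp_conj_act.
split; first exact: sat_Cp_proper.
split; first by rewrite (star_p Kop Kp) subrr; exact: (subspace0 (Jp_subspace _ _ _ _)).
split; first exact: sat_Cp_order_unit.
exact: sat_Cp_archimedean.
Qed.
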